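(* Let $p,q$ be positive integers with $1<q<p-q$, $\gcd(p,q)=1$, and $A=\langle q,p-q\rangle$. Let $((\mathbb{Z},G_{0,j}^+),f_{0,j})_{j\ge0}$ be a directed system of simple components with $G_{0,0}^+=A$, where each $f_{0,j}\colon(\mathbb{Z},G_{0,j}^+)\to(\mathbb{Z},G_{0,j+1}^+)$ is an order-embedding given by multiplication by a positive integer $n_j$, and let $(H,H^+)$ be its direct limit. Let $\mathfrak{n}=\prod_{j\ge0}n_j$, and suppose $r>q$ is a positive integer coprime with $\mathfrak{n}$ and $s\in A$ satisfies $\gcd(r,s)=1$ and $r<s-r$; put $B=\langle r,s-r\rangle$. Define $G_{i,0}^+=rG_{i-1,0}^++s^iB$ for $i>0$ and $G_{i,j}^+=rG_{i-1,j}^++n_{j-1}G_{i,j-1}^+$ for $i,j>0$. Let $f_{i,j}\colon(\mathbb{Z},G_{i,j}^+)\to(\mathbb{Z},G_{i,j+1}^+)$ be multiplication by $n_j$ and $g_{i,j}\colon(\mathbb{Z},G_{i,j}^+)\to(\mathbb{Z},G_{i+1,j}^+)$ multiplication by $r$; let $G_i^+=G_{i,i}^+$ and $f_i\colon(\mathbb{Z},G_i^+)\to(\mathbb{Z},G_{i+1}^+)$ be multiplication by $rn_i$. Let $(K,K^+)=\varinjlim((\mathbb{Z},G_{i,0}^+),g_{i,0})$. Then: (i) $(\mathbb{Z},G_{i,j}^+)$ is a simple component for all $i,j$; (ii) all $f_{i,j}$ and $g_{i,j}$ are order-embeddings; (iii) the direct limit $(G,G^+)$ of $((\mathbb{Z},G_i^+),f_i)$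 is a simple partially ordered group of rank one, and there are order-embeddings $(H,H^+)\to(G,G^+)$ and $(K,K^+)\to(G,G^+)$; (iv) there is an interval $D_r\subseteq G^+$ with $tD_r\neq G^+$ for every positive integer $t\le r-1$ and $rD_r=G^+$.
   Context: $\langle a_1,\dots,a_k\rangle$: submonoid of $\mathbb{Z}^+$ generated by the $a_i$; for subsets $X,Y\subseteq\mathbb{Z}$ and integers $m$, $mX+Y=\{mx+y\}$. A simple component is a simple partially ordered abelian group $(\mathbb{Z},P)$ (simple: every nonzero positive element $u$ is an order-unit, i.e. for all $x$ there is $n$ with $-nu\le x\le nu$). Order-embedding: injective homomorphism with $f(G^+)=f(G)\cap H^+$. Rank one: isomorphic to a nonzero subgroup of $\mathbb{Q}$. Direct limits carry as positive cone the union of images of positive cones. The generalized integer $\prod_j n_j$ assigns to each prime $\ell$ the (possibly infinite) sum of the exponents of $\ell$ in the $n_j$; $r$ coprime with it means no prime divisor of $r$ divides any $n_j$. An interval in $G^+$ is a nonempty, upward directed, order-hereditary subset of $G^+$; $X+Y=\{z\in G^+: z\le x+y,\ x\in X,\ y\in Y\}$ and $tX$ is the $t$-fold sum. *)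

From mathcomp Require Import all_boot all_order all_algebra.
Set Implicit Arguments. Unset Strict Implicit. Unset Printing Implicit Defensive.
Import Order.TTheory GRing.Theory Num.Theory.
Local Open Scope ring_scope.

Definition gen2 (a b : int) : int -> Prop :=
  fun z => exists x y : nat, z = a *+ x + b *+ y.

Definition msum (m : int) (X : int -> Prop) (k : int) (Y : int -> Prop)
  : int -> Prop :=
  fun z => exists x y, X x /\ Y y /\ z = m * x + k * y.

Definition pocone (G : zmodType) (Gp : G -> Prop) : Prop :=
  [/\ Gp 0,
      (forall x y, Gp x -> Gp y -> Gp (x + y))
    & (forall x, Gp x -> Gp (- x) -> x = 0)].

Definition order_unit (G : zmodType) (Gp : G -> Prop) (u : G) : Prop :=
  forall x, exists n : nat, Gp (x + u *+ n) /\ Gp (u *+ n - x).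

Definition simple_pog (G : zmodType) (Gp : G -> Prop) : Prop :=
  pocone Gp /\ (forall u, Gp u -> u != 0 -> order_unit Gp u).

Definition simple_component (P : int -> Prop) : Prop := simple_pog P.

Definition order_embedding (G H : zmodType) (Gp : G -> Prop) (Hp : H -> Prop)
  (psi : G -> H) : Prop :=
  [/\ (forall x y, psi (x + y) = psi x + psi y),
      injective psi
    & (forall x, Gp x <-> Hp (psi x))].

(** [(G, Gp)] with canonical maps [phi i : Z -> G] is a direct limit of the
    directed system [((Z, P i), multiplication by m i)]: the group [G] is the
    direct limit of abelian groups (compatible cocone of homomorphisms, jointly
    surjective, with kernel of [phi i] consisting of the elements eventually
    sent to 0), and the positive cone is the union of the images of the
    positive cones. *)
Definition is_dlimit (P : nat -> int -> Prop) (m : nat -> int)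
  (G : zmodType) (Gp : G -> Prop) (phi : nat -> int -> G) : Prop :=
  [/\ (forall i x y, phi i (x + y) = phi i x + phi i y),
      (forall i x, phi i.+1 (m i * x) = phi i x),
      (forall g, exists i x, g = phi i x),
      (forall i x, phi i x = 0 ->
          exists k, (\prod_(i <= l < i + k) m l) * x = 0)
    & (forall g, Gp g <-> exists i x, P i x /\ g = phi i x)].

Definition rank_one (G : zmodType) : Prop :=
  (exists g : G, g != 0) /\
  exists psi : G -> rat,
    (forall x y, psi (x + y) = psi x + psi y) /\ injective psi.

Definition pole (G : zmodType) (Gp : G -> Prop) (x y : G) := Gp (y - x).

Definition g_interval (G : zmodType) (Gp : G -> Prop) (D : G -> Prop) : Prop :=
  [/\ (forall x, D x -> Gp x),
      (exists x, D x),
      (forall x y, D x -> D y -> exists z, [/\ D z, pole Gp x z & pole Gp y z])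
    & (forall x y, D x -> Gp y -> pole Gp y x -> D y)].

Definition isum (G : zmodType) (Gp : G -> Prop) (X Y : G -> Prop) : G -> Prop :=
  fun z => Gp z /\ exists x y, [/\ X x, Y y & pole Gp z (x + y)].

(** [t X], the t-fold sum (t >= 1; the value at t = 0 is irrelevant). *)
Fixpoint imul (G : zmodType) (Gp : G -> Prop) (t : nat) (X : G -> Prop)
  : G -> Prop :=
  match t with
  | 0 => fun z => z = 0
  | t'.+1 => match t' with
             | 0 => X
             | _ => isum Gp (imul Gp t' X) X
             end
  end.

Fixpoint Gcone (P0 : nat -> int -> Prop) (n : nat -> nat) (r s : nat)
  (i : nat) : nat -> int -> Prop :=
  match i with
  | 0 => P0
  | i'.+1 =>
      let prev := Gcone P0 n r s i' in
      fix row (j : nat) : int -> Prop :=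
        match j with
        | 0 => msum r%:Z (prev 0%N) ((s%:Z) ^+ i'.+1)
                    (gen2 r%:Z (s%:Z - r%:Z))
        | j'.+1 => msum r%:Z (prev j'.+1) (n j')%:Z (row j')
        end
  end.

Arguments imul {G} Gp t X _.

(* Every cone [G_{i,j}^+] is a numerical semigroup, i.e. a submonoid of [N]
   containing all large integers: [G_{0,j}^+] is one because it is a simple
   component with a positive element, and a sum [r X + c Y] of numerical
   semigroups with [gcd(r, c) = 1] is again one.  Numerical semigroups are
   simple components, and since [r] is coprime to [s] and to every [n_j], a
   relation [r x = r y + c z] forces [r | z]; this makes multiplication by [r]
   and by [n_j] order-embeddings.  The diagonal limit [G] is therefore simple,
   it embeds in [Q] via [x] at level [i] |-> [x / (r n_0 ... r n_{i-1})], and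
   [H], [K] embed in it by the rescalings [x |-> r^i x] and
   [x |-> n_0 ... n_{i-1} x] at level [i].

   For (iv), [D_r] is the interval below the increasing chain [d_M], the image
   of [n_0 ... n_{M-1} y_M] at level [M] with [y_M = s^{M+1} - s r^M].  Its
   [t]-fold sum is the set of elements below some [t d_M].  A descent on [M]
   using [gcd(r, s^{M+1}(s-r)) = 1] shows [t y_M - r^M s] is not in [G_{M,0}^+]
   for [t < r], so the image of [s] is not in [t D_r]; on the other hand
   [r y_M - M r^M s(s-r)] lies in [G_{M,0}^+], so [r d_M] dominates [M] times
   the image of [s(s-r)], which is an order-unit. *)

From mathcomp Require Import all_boot all_order all_algebra.
From mathcomp Require Import ring lra zify.
Import Order.TTheory GRing.Theory Num.Theory.
Local Open Scope ring_scope.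
Set Implicit Arguments. Unset Strict Implicit.

Lemma coprimez_mul_eq (a b x y : int) : a != 0 -> coprimez a b ->
  a * x = b * y -> exists z, y = a * z /\ x = b * z.
Proof.
move=> a0 cab e.
have /dvdzP[z yE] : (a %| y)%Z by rewrite -(Gauss_dvdzr _ cab) -e dvdz_mulr.
exists z; split; first by rewrite mulrC.
by apply: (mulfI a0); rewrite e yE; ring.
Qed.

(* The residue [k] solves [g k = x (mod c)]: with [u c + v g = 1] take [k = x v mod c]. *)
Lemma coprimez_decomp_ge (c g N x : int) : 0 < c -> 0 < g -> coprimez c g ->
  c * N + g * c <= x -> exists y k, [/\ N <= y, 0 <= k < c & x = c * y + g * k].
Proof.
move=> c_gt0 g_gt0 /eqP cg x_ge; have [u [v]] := Bezoutz c g; rewrite cg => uv.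
have c_neq0 : c != 0 by rewrite gt_eqF.
set k := ((x * v) %% c)%Z; set y := x * u + g * ((x * v) %/ c)%Z.
have k_ge0 : 0 <= k by apply: modz_ge0.
have k_lt : k < c by have := ltz_mod (x * v) c_neq0; rewrite gtr0_norm.
have xE : x = c * y + g * k.
  have xvE := divz_eq (x * v) c.
  transitivity (x * (u * c + v * g) - g * (x * v - (((x * v) %/ c)%Z * c + k))).
    by rewrite uv -xvE subrr mulr1 mulr0 subr0.
  by rewrite /y /k; ring.
exists y, k; split; [|by rewrite k_ge0 k_lt|by []].
have : c * N < c * y by nra.
by rewrite ltr_pM2l // => /ltW.
Qed.

Lemma coprimezS (a : int) : coprimez a (1 + a).
Proof. by apply/coprimezP; exists (-1, 1); rewrite /=; ring. Qed.

Definition submonoid (C : int -> Prop) : Prop :=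
  C 0 /\ (forall x y, C x -> C y -> C (x + y)).

Definition numerical (C : int -> Prop) : Prop :=
  [/\ submonoid C, (forall x, C x -> 0 <= x) & exists N, forall x, N <= x -> C x].

Section Submonoid.
Variable C : int -> Prop.
Hypothesis C_monoid : submonoid C.

Lemma submonoid_mulrn (x : int) (k : nat) : C x -> C (x *+ k).
Proof.
case: C_monoid => C0 CD Cx.
by elim: k => [|k IH]; rewrite ?mulr0n // mulrS; apply: CD.
Qed.

Lemma submonoid_mulz (k x : int) : 0 <= k -> C x -> C (k * x).
Proof. by case: k => // k _ Cx; rewrite -natz mulr_natl; apply: submonoid_mulrn. Qed.

Lemma gen2_sub (a b : int) : C a -> C b -> forall x, gen2 a b x -> C x.
Proof.
by move=> Ca Cb _ [x [y ->]]; apply: C_monoid.2; apply: submonoid_mulrn.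
Qed.

End Submonoid.

Lemma gen2_submonoid (a b : int) : submonoid (gen2 a b).
Proof.
split; first by exists 0%N, 0%N; rewrite !mulr0n addr0.
move=> _ _ [x1 [y1 ->]] [x2 [y2 ->]]; exists (x1 + x2)%N, (y1 + y2)%N.
by rewrite !mulrnDr addrACA.
Qed.

Lemma gen2l (a b : int) : gen2 a b a.
Proof. by exists 1%N, 0%N; rewrite mulr1n mulr0n addr0. Qed.

Lemma gen2r (a b : int) : gen2 a b b.
Proof. by exists 0%N, 1%N; rewrite mulr1n mulr0n add0r. Qed.

Lemma msumI (m k x y : int) (X Y : int -> Prop) : X x -> Y y -> msum m X k Y (m * x + k * y).
Proof. by move=> Xx Yy; exists x, y. Qed.

Lemma msum_submonoid (m k : int) (X Y : int -> Prop) :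
  submonoid X -> submonoid Y -> submonoid (msum m X k Y).
Proof.
move=> [X0 XD] [Y0 YD]; split; first by exists 0, 0; rewrite !mulr0 addr0.
move=> _ _ [x1 [y1 [Xx1 [Yy1 ->]]]] [x2 [y2 [Xx2 [Yy2 ->]]]].
exists (x1 + x2), (y1 + y2); split; [exact: XD | split; [exact: YD | ring]].
Qed.

Lemma gen2_numerical (a b : int) : 0 < a -> 0 < b -> coprimez a b -> numerical (gen2 a b).
Proof.
move=> a_gt0 b_gt0 ab; split; first exact: gen2_submonoid.
  by move=> _ [x [y ->]]; apply: addr_ge0; apply: mulrn_wge0; apply: ltW.
exists (b * a) => x x_ge.
have [y [k [y_ge0 /andP[k_ge0 _] ->]]] :
    exists y k, [/\ 0 <= y, 0 <= k < a & x = a * y + b * k].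
  by apply: coprimez_decomp_ge; rewrite ?mulr0 ?add0r.
apply: (gen2_submonoid a b).2; rewrite mulrC.
  by apply: submonoid_mulz; [exact: gen2_submonoid | | exact: gen2l].
by apply: submonoid_mulz; [exact: gen2_submonoid | | exact: gen2r].
Qed.

Lemma msum_numerical (m k : int) (X Y : int -> Prop) : 0 < m -> 0 < k -> coprimez m k ->
  numerical X -> numerical Y -> numerical (msum m X k Y).
Proof.
move=> m_gt0 k_gt0 mk [Xmon X_ge0 [N1 XN1]] [Ymon Y_ge0 [N2 YN2]].
split; first exact: msum_submonoid.
  move=> _ [x [y [Xx [Yy ->]]]].
  by apply: addr_ge0; apply: mulr_ge0;
    [exact: ltW | exact: X_ge0 | exact: ltW | exact: Y_ge0].
exists (m * N1 + k * m + k * N2) => x x_ge.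
have x_ge' : m * N1 + k * m <= x - k * N2 by lra.
have [y [l [y_ge /andP[l_ge0 _] xE]]] := coprimez_decomp_ge m_gt0 k_gt0 mk x_ge'.
have -> : x = m * y + k * (N2 + l) by rewrite -[x](subrK (k * N2)) xE; ring.
by apply: msumI; [apply: XN1 | apply: YN2; lra].
Qed.

Lemma numerical_simple (C : int -> Prop) : numerical C -> simple_component C.
Proof.
move=> [[C0 CD] C_ge0 [N CN]]; split.
  by split=> // x Cx CNx; apply/eqP; rewrite eq_le -oppr_ge0 !C_ge0.
move=> u Cu u_neq0 x; have u_ge1 : 1 <= u by have := C_ge0 _ Cu; move: u_neq0; lia.
exists (`|x| + `|N|)%N; rewrite -mulr_natr natz PoszD !abszE.
by split; apply: CN; nia.
Qed.

Lemma simple_component_ge0 (C : int -> Prop) (u : int) : simple_component C -> C u -> 0 < u ->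
  forall x, C x -> 0 <= x.
Proof.
move=> [[C0 CD C_anti] _] Cu u_gt0 x Cx; rewrite leNgt; apply/negP => x_lt0.
have Cmon : submonoid C by [].
have Cux : C (u * x) by apply: submonoid_mulz; rewrite // ltW.
have CNux : C (- (u * x)).
  by rewrite -mulrN mulrC; apply: submonoid_mulz; rewrite // oppr_ge0 ltW.
by have /eqP := C_anti _ Cux CNux; rewrite mulf_eq0; lia.
Qed.

Lemma simple_component_numerical (C : int -> Prop) (u : int) :
  simple_component C -> C u -> 0 < u -> numerical C.
Proof.
move=> Csimple Cu u_gt0; have C_ge0 := simple_component_ge0 Csimple Cu u_gt0.
have [[C0 CD _] unitC] := Csimple; have Cmon : submonoid C by [].
have [k [Ca1 Ca_1]] := unitC u Cu (lt0r_neq0 u_gt0) 1.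
have Ca : C (u *+ k) by apply: submonoid_mulrn.
have a_gt0 : 0 < u *+ k by have := C_ge0 _ Ca_1; lia.
have [_ _ [N gen2N]] :=
  gen2_numerical a_gt0 (ltr_wpDl ler01 a_gt0) (coprimezS (u *+ k)).
by split=> //; exists N => x /gen2N; apply: gen2_sub.
Qed.

Section AdditiveInt.
Variables (G : zmodType) (f : int -> G).
Hypothesis fD : {morph f : x y / x + y}.

Lemma addf0 : f 0 = 0.
Proof. by apply: (@addrI _ (f 0)); rewrite -fD !addr0. Qed.

Lemma addfN x : f (- x) = - f x.
Proof. by apply: (@addrI _ (f x)); rewrite -fD !subrr addf0. Qed.

Lemma addfB x y : f (x - y) = f x - f y.
Proof. by rewrite fD addfN. Qed.

Lemma addfMn x k : f (x *+ k) = f x *+ k.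
Proof. by elim: k => [|k IH]; rewrite ?mulr0n ?addf0 // !mulrS fD IH. Qed.

End AdditiveInt.

Definition bond (m : nat -> int) (i k : nat) : int := \prod_(i <= l < k) m l.

Lemma bondS (m : nat -> int) (i k : nat) : (i <= k)%N -> bond m i k.+1 = m k * bond m i k.
Proof. by move=> ik; rewrite /bond big_nat_recr // mulrC. Qed.

Lemma bondnn (m : nat -> int) (i : nat) : bond m i i = 1.
Proof. by rewrite /bond big_geq. Qed.

Lemma bond_neq0 (m : nat -> int) (i k : nat) : (forall l, m l != 0) -> bond m i k != 0.
Proof. by move=> m_neq0; rewrite /bond prodf_seq_neq0; apply/allP => l _; apply: m_neq0. Qed.

Lemma bond_gt0 (m : nat -> int) (i k : nat) : (forall l, 0 < m l) -> 0 < bond m i k.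
Proof. by move=> m_gt0; apply: prodr_gt0 => l _; apply: m_gt0. Qed.

Lemma bond_cst (a : int) (i k : nat) : bond (fun=> a) i k = a ^+ (k - i).
Proof. exact: prodr_const_nat. Qed.

Lemma bondM (a b : nat -> int) (i k : nat) :
  bond (fun l => a l * b l) i k = bond a i k * bond b i k.
Proof. exact: big_split. Qed.

Lemma cocone_bond (T : Type) (f : nat -> int -> T) (m : nat -> int) :
  (forall l x, f l.+1 (m l * x) = f l x) ->
  forall i k x, (i <= k)%N -> f k (bond m i k * x) = f i x.
Proof.
move=> fm i k x /subnKC <-; elim: (k - i)%N => [|d IH]; first by rewrite addn0 bondnn mul1r.
by rewrite addnS bondS ?leq_addr // -mulrA fm.
Qed.

Lemma bond_iff (P : nat -> int -> Prop) (m : nat -> int) :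
  (forall l x, P l x <-> P l.+1 (m l * x)) ->
  forall i k x, (i <= k)%N -> (P i x <-> P k (bond m i k * x)).
Proof.
move=> Pm i k x /subnKC <-; elim: (k - i)%N => [|d IH]; first by rewrite addn0 bondnn mul1r.
by rewrite addnS bondS ?leq_addr // -mulrA -Pm.
Qed.

Section DirectLimit.
Variables (P : nat -> int -> Prop) (m : nat -> int).
Variables (G : zmodType) (Gp : G -> Prop) (phi : nat -> int -> G).
Hypothesis limG : is_dlimit P m Gp phi.

Let phiD i : {morph phi i : x y / x + y}.
Proof. by case: limG => D _ _ _ _; apply: D. Qed.

Lemma dlimit_bond i k x : (i <= k)%N -> phi k (bond m i k * x) = phi i x.
Proof. by apply: cocone_bond; case: limG. Qed.

Let phi_onto g : exists i x, g = phi i x.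
Proof. by case: limG => _ _ onto _ _; apply: onto. Qed.

Lemma dlimit_common_level g h : exists k a b, g = phi k a /\ h = phi k b.
Proof.
have [i [x ->]] := phi_onto g; have [j [y ->]] := phi_onto h.
exists (i + j)%N, (bond m i (i + j) * x), (bond m j (i + j) * y).
by rewrite !dlimit_bond ?leq_addr ?leq_addl.
Qed.

Hypothesis m_neq0 : forall l, m l != 0.

Lemma dlimit_inj i : injective (phi i).
Proof.
case: limG => _ _ _ phi_ker _ x y xy; apply/eqP; rewrite -subr_eq0.
have [k /eqP] : exists k, bond m i (i + k) * (x - y) = 0.
  by apply: phi_ker; rewrite addfB ?xy ?subrr.
by rewrite mulf_eq0 (negbTE (bond_neq0 _ _ m_neq0)).
Qed.

Lemma dlimit_eq i x j y : phi i x = phi j y ->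
  bond m i (i + j) * x = bond m j (i + j) * y.
Proof.
by move=> e; apply: (@dlimit_inj (i + j)); rewrite !dlimit_bond ?leq_addr ?leq_addl.
Qed.

Lemma dlimit_factor (H : zmodType) (phi' : nat -> int -> H) :
  (forall i, {morph phi' i : x y / x + y}) ->
  (forall i x, phi' i.+1 (m i * x) = phi' i x) ->
  (forall i, injective (phi' i)) ->
  exists psi : G -> H, [/\ {morph psi : x y / x + y}, injective psi
                         & forall i x, psi (phi i x) = phi' i x].
Proof.
move=> phi'D phi'm phi'_inj.
have onto g : exists ix : nat * int, g == phi ix.1 ix.2.
  by have [i [x ->]] := phi_onto g; exists (i, x).
pose psi g := phi' (xchoose (onto g)).1 (xchoose (onto g)).2.
have psiE i x : psi (phi i x) = phi' i x.
  have /eqP/dlimit_eq e := xchooseP (onto (phi i x)); rewrite /psi.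
  by rewrite -(cocone_bond phi'm _ (leq_addl i _)) -e cocone_bond ?leq_addr.
exists psi; split=> // [g h | g h].
  by have [k [a [b [-> ->]]]] := dlimit_common_level g h; rewrite -phiD !psiE phi'D.
by have [k [a [b [-> ->]]]] := dlimit_common_level g h; rewrite !psiE => /phi'_inj ->.
Qed.

Lemma dlimit_rank_one : rank_one G.
Proof.
have bond_neq0' i : (bond m 0 i)%:~R != 0 :> rat by rewrite intr_eq0 bond_neq0.
pose phi' i (x : int) : rat := x%:~R / (bond m 0 i)%:~R.
have [psi [psiD psi_inj _]] : exists psi : G -> rat, [/\ {morph psi : x y / x + y},
    injective psi & forall i x, psi (phi i x) = phi' i x].
  apply: dlimit_factor => [i x y | i x | i x y].
  - by rewrite /phi' rmorphD mulrDl.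
  - by rewrite /phi' bondS // !intrM invfM mulrACA divff ?mul1r // intr_eq0.
  - by move/(mulIf (invr_neq0 (bond_neq0' i)))/intr_inj.
split; last by exists psi.
by exists (phi 0%N 1); rewrite -(addf0 (phiD 0)) (inj_eq (@dlimit_inj 0%N)).
Qed.

Hypothesis Pm : forall i x, P i x <-> P i.+1 (m i * x).

Lemma dlimit_pos i x : Gp (phi i x) <-> P i x.
Proof.
case: limG => _ _ _ _ ->; split=> [[j [y [Pjy /dlimit_eq e]]] | Pix]; last by exists i, x.
by apply/(bond_iff Pm x (leq_addr j i)); rewrite e -(bond_iff Pm) ?leq_addl.
Qed.

Hypothesis P_simple : forall i, simple_component (P i).

Lemma dlimit_simple : simple_pog Gp.
Proof.
split; first split.
- by rewrite -(addf0 (phiD 0)) dlimit_pos; case: (P_simple 0) => [[]].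
- move=> g h; have [k [a [b [-> ->]]]] := dlimit_common_level g h.
  by rewrite -phiD !dlimit_pos; case: (P_simple k) => [[_ PD _] _]; apply: PD.
- move=> g; have [k [a ->]] := phi_onto g.
  rewrite -addfN ?dlimit_pos // => Pa PNa; case: (P_simple k) => [[_ _ P_anti] _].
  by rewrite (P_anti _ Pa PNa) addf0.
move=> u Gu u_neq0 g; have [k [a [b [uE gE]]]] := dlimit_common_level u g.
move: Gu u_neq0; rewrite uE gE dlimit_pos => Pa a_neq0.
have [|N] := (P_simple k).2 a Pa _ b.
  by apply: contraNneq a_neq0 => ->; rewrite addf0.
exists N; rewrite -(addfMn (phiD k)) -(addfB (phiD k)) -phiD.
by rewrite !dlimit_pos.
Qed.

End DirectLimit.

Lemma dlimit_order_embedding (P Q : nat -> int -> Prop) (m m' c : nat -> int)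
    (H : zmodType) (Hp : H -> Prop) (phiH : nat -> int -> H)
    (G : zmodType) (Gp : G -> Prop) (phiG : nat -> int -> G) :
  is_dlimit P m Hp phiH -> is_dlimit Q m' Gp phiG ->
  (forall l, m l != 0) -> (forall l, m' l != 0) -> (forall l, c l != 0) ->
  (forall i x, P i x <-> P i.+1 (m i * x)) ->
  (forall i x, Q i x <-> Q i.+1 (m' i * x)) ->
  (forall i, m' i * c i = c i.+1 * m i) ->
  (forall i x, P i x <-> Q i (c i * x)) ->
  exists psi : H -> G, order_embedding Hp Gp psi.
Proof.
move=> limH limG m_neq0 m'_neq0 c_neq0 Pm Qm' cm PQ.
have [phiGD phiGm _ _ _] := limG; have [_ _ phiH_onto _ _] := limH.
have [psi [psiD psi_inj psiE]] : exists psi : H -> G, [/\ {morph psi : x y / x + y},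
    injective psi & forall i x, psi (phiH i x) = phiG i (c i * x)].
  apply: (dlimit_factor limH m_neq0) => [i x y | i x | i x y].
  - by rewrite mulrDr phiGD.
  - by rewrite mulrA -cm -mulrA phiGm.
  - by move/(dlimit_inj limG m'_neq0)/(mulfI (c_neq0 i)).
exists psi; split=> // h; have [i [x ->]] := phiH_onto h.
by rewrite psiE (dlimit_pos limH) // (dlimit_pos limG) // PQ.
Qed.

Definition below_chain (G : zmodType) (Gp : G -> Prop) (d : nat -> G) : G -> Prop :=
  fun g => Gp g /\ exists M, pole Gp g (d M).

Section ChainInterval.
Variables (G : zmodType) (Gp : G -> Prop) (d : nat -> G).
Hypotheses (Gp0 : Gp 0) (GpD : forall x y, Gp x -> Gp y -> Gp (x + y)).
Hypotheses (d_pos : forall M, Gp (d M)) (d_step : forall M, pole Gp (d M) (d M.+1)).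

Lemma Gp_mulrn x k : Gp x -> Gp (x *+ k).
Proof. by move=> Gx; elim: k => [|k IH]; rewrite ?mulr0n // mulrS; apply: GpD. Qed.

Lemma pole_trans x y z : pole Gp x y -> pole Gp y z -> pole Gp x z.
Proof. by rewrite /pole => xy yz; rewrite -[z](subrK y) -addrA; apply: GpD. Qed.

Lemma pole_refl x : pole Gp x x.
Proof. by rewrite /pole subrr. Qed.

Lemma pole_add x y x' y' : pole Gp x y -> pole Gp x' y' -> pole Gp (x + x') (y + y').
Proof. by rewrite /pole opprD addrACA; apply: GpD. Qed.

Lemma pole_mulrn x y k : pole Gp x y -> pole Gp (x *+ k) (y *+ k).
Proof.
move=> xy; elim: k => [|k IH]; first by rewrite !mulr0n; apply: pole_refl.
by rewrite !mulrS; apply: pole_add.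
Qed.

Lemma chain_mono M M' : (M <= M')%N -> pole Gp (d M) (d M').
Proof.
move=> /subnKC <-; elim: (M' - M)%N => [|k IH]; first by rewrite addn0; apply: pole_refl.
by rewrite addnS; apply: pole_trans IH (d_step _).
Qed.

Lemma below_chain_interval : g_interval Gp (below_chain Gp d).
Proof.
split=> [x [] // | | x y [_ [M xM]] [_ [M' yM']] | x y [_ [M xM]] Gy yx].
- by exists (d 0%N); split=> //; exists 0%N; apply: pole_refl.
- exists (d (M + M')%N); split; first by split=> //; exists (M + M')%N; apply: pole_refl.
    by apply: pole_trans xM (chain_mono (leq_addr _ _)).
  by apply: pole_trans yM' (chain_mono (leq_addl _ _)).
by split=> //; exists M; apply: pole_trans yx xM.
Qed.

Lemma imul_below_chain t g : (0 < t)%N ->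
  imul Gp t (below_chain Gp d) g <-> Gp g /\ exists M, pole Gp g (d M *+ t).
Proof.
case: t => // t _; elim: t g => [|t IH] g; first by [].
change (isum Gp (imul Gp t.+1 (below_chain Gp d)) (below_chain Gp d) g <->
  Gp g /\ exists M, pole Gp g (d M *+ t.+2)).
split=> [[Gg [x [y [/IH [_ [M xM]] [_ [M' yM']] gxy]]]] | [Gg [M gM]]].
  split=> //; exists (M + M')%N; apply: pole_trans gxy _; rewrite mulrSr.
  apply: pole_add; last exact: pole_trans yM' (chain_mono (leq_addl _ _)).
  exact: pole_trans xM (pole_mulrn _ (chain_mono (leq_addr _ _))).
split=> //; exists (d M *+ t.+1), (d M); split; last by rewrite -mulrSr.
  by apply/IH; split; [exact: Gp_mulrn | exists M; apply: pole_refl].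
by split=> //; exists M; apply: pole_refl.
Qed.

End ChainInterval.

Lemma coprime_prime_divisors (a b : nat) : (0 < a)%N -> (0 < b)%N ->
  (forall l, prime l -> (l %| a)%N -> ~~ (l %| b)%N) -> coprime a b.
Proof.
move=> a_gt0 b_gt0 ab; rewrite coprime_has_primes //; apply/hasPn => l.
rewrite !mem_primes b_gt0 a_gt0 /= => /andP[l_prime l_b].
by apply/negP => /andP[_ /(ab l l_prime)]; rewrite l_b.
Qed.

Section Construction.
Variables (r s : nat) (n : nat -> nat) (P0 : nat -> int -> Prop).
Hypotheses (r_gt0 : (0 < r)%N) (r_lt_sr : (r < s - r)%N) (rs_coprime : coprime r s).
Hypotheses (n_gt0 : forall j, (0 < n j)%N) (rn_coprime : forall j, coprime r (n j)).
Hypotheses (P0_simple : forall j, simple_component (P0 j)) (P00_s : P0 0%N s%:Z).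
Hypothesis P0_bond : forall j x, P0 j x <-> P0 j.+1 ((n j)%:Z * x).

Local Notation R := r%:Z.
Local Notation S := s%:Z.
Local Notation B := (gen2 R (S - R)).
Local Notation Gc := (Gcone P0 n r s).
Local Notation nZ j := (n j)%:Z.

Lemma GcS0E i : Gc i.+1 0 = msum R (Gc i 0) (S ^+ i.+1) B. Proof. by []. Qed.
Lemma GcSSE i j : Gc i.+1 j.+1 = msum R (Gc i j.+1) (nZ j) (Gc i.+1 j). Proof. by []. Qed.

Let R_gt0 : 0 < R. Proof. by rewrite ltz_nat. Qed.
Let SR_gt0 : 0 < S - R. Proof. rewrite subr_gt0 ltz_nat; lia. Qed.
Let S_gt0 : 0 < S. Proof. by apply: lt_trans SR_gt0 _; rewrite ltrBlDr ltrDl. Qed.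
Let nZ_gt0 j : 0 < nZ j. Proof. by rewrite ltz_nat. Qed.

Let coprimez_R_SR : coprimez R (S - R).
Proof.
rewrite subzn ?coprimezE /=; last lia.
by rewrite /coprime -gcdnDl subnKC //; lia.
Qed.

Let coprimez_R_S : coprimez R S. Proof. by rewrite coprimezE. Qed.
Let coprimez_R_SSR M : coprimez R (S ^+ M * (S - R)).
Proof. by rewrite coprimezMr coprimezXr. Qed.

Let coprimez_R_nZ j : coprimez R (nZ j). Proof. exact: rn_coprime. Qed.

Lemma B_numerical : numerical B.
Proof. exact: gen2_numerical. Qed.

Lemma P0_numerical j : numerical (P0 j).
Proof.
apply: (simple_component_numerical (u := bond (fun l => nZ l) 0 j * S)) => //.
  exact/(bond_iff P0_bond _ (leq0n j)).
by rewrite mulr_gt0 ?bond_gt0.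
Qed.

Lemma Gc_numerical i j : numerical (Gc i j).
Proof.
elim: i j => [|i IH] j; first exact: P0_numerical.
elim: j => [|j IHj]; rewrite ?GcS0E ?GcSSE; apply: msum_numerical => //.
- exact: exprn_gt0.
- exact: coprimezXr.
- exact: B_numerical.
Qed.

Lemma Gc_simple i j : simple_component (Gc i j).
Proof. exact/numerical_simple/Gc_numerical. Qed.

Lemma Gc_submonoid i j : submonoid (Gc i j).
Proof. by case: (Gc_numerical i j). Qed.

Lemma Gc0 i j : Gc i j 0.
Proof. by case: (Gc_submonoid i j). Qed.

Lemma GcD i j x y : Gc i j x -> Gc i j y -> Gc i j (x + y).
Proof. by case: (Gc_submonoid i j) => _; apply. Qed.

Lemma Gc_ge0 i j x : Gc i j x -> 0 <= x.
Proof. by case: (Gc_numerical i j) => _ Gc_ge0 _; apply: Gc_ge0. Qed.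

Lemma B_S : B S.
Proof. by exists 1%N, 1%N; rewrite addrC subrK. Qed.

Lemma Gc_r i j x : Gc i j x -> Gc i.+1 j (R * x).
Proof.
case: j => [|j] Cx; rewrite -[R * x]addr0.
  by rewrite GcS0E -(mulr0 (S ^+ i.+1)); apply: msumI => //; case: (gen2_submonoid R (S - R)).
by rewrite GcSSE -(mulr0 (nZ j)); apply: msumI => //; apply: Gc0.
Qed.

Lemma Gc_n i j x : Gc i j x -> Gc i j.+1 (nZ j * x).
Proof.
case: i => [|i] Cx; first exact: (P0_bond j x).1.
by rewrite GcSSE -[_ * x]add0r -(mulr0 R); apply: msumI => //; apply: Gc0.
Qed.

Lemma Gc_s i : Gc i 0 (S ^+ i.+1).
Proof.
elim: i => [|i IH]; first by rewrite expr1; exact: P00_s.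
have -> : S ^+ i.+2 = R * 0 + S ^+ i.+1 * S by rewrite mulr0 add0r exprSr.
by rewrite GcS0E; apply: msumI; [apply: Gc0 | apply: B_S].
Qed.

Lemma Gc_bond_r j i x : Gc i j x <-> Gc i.+1 j (R * x).
Proof.
have R_neq0 : R != 0 by rewrite gt_eqF.
elim: j i x => [|j IH] i x; split=> [|Cx]; try exact: Gc_r.
  have [y [b [Cy [Bb e]]]] := Cx.
  have [z [bE xyE]] : exists z, b = R * z /\ x - y = S ^+ i.+1 * z.
    by apply: coprimez_mul_eq; rewrite ?coprimezXr // mulrBr e addrC addKr.
  have z_ge0 : 0 <= z.
    by rewrite -(pmulr_rge0 _ R_gt0) -bE; case: B_numerical => _ B_ge0 _; apply: B_ge0.
  rewrite -(subrK y x) xyE addrC mulrC; apply: GcD Cy _.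
  by apply: submonoid_mulz z_ge0 (Gc_s i); apply: Gc_submonoid.
have [y [z [Cy [Cz e]]]] := Cx.
have [w [zE xyE]] : exists w, z = R * w /\ x - y = nZ j * w.
  by apply: coprimez_mul_eq; rewrite // mulrBr e addrC addKr.
rewrite -(subrK y x) xyE addrC; apply: GcD Cy (Gc_n _).
by apply/IH; rewrite -zE.
Qed.

Lemma Gc_bond_n i j x : Gc i j x <-> Gc i j.+1 (nZ j * x).
Proof.
elim: i j x => [|i IH] j x; first exact: P0_bond.
split=> [|Cx]; first exact: Gc_n.
have [y [z [Cy [Cz e]]]] := Cx.
have [w [yE xzE]] : exists w, y = nZ j * w /\ x - z = R * w.
  apply: coprimez_mul_eq; first by rewrite gt_eqF.
    by rewrite coprimez_sym.
  by rewrite mulrBr e addrK.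
rewrite -(subrK z x) xzE; apply: GcD (Gc_r _) Cz.
by apply/IH; rewrite -yE.
Qed.

(* [yseq M = sum_(1 <= k <= M) r^(M-k) (s-r) s^k]: the element of [G_{M,0}]
   obtained by adding [(s-r) s^k], a generator of [s^k B], at each level [k]. *)
Definition yseq (M : nat) : int := S ^+ M.+1 - S * R ^+ M.

Lemma yseqS M : yseq M.+1 = R * yseq M + S ^+ M.+1 * (S - R).
Proof. by rewrite /yseq !exprS; ring. Qed.

Lemma Gc_yseq M : Gc M 0 (yseq M).
Proof.
elim: M => [|M IH]; first by rewrite /yseq expr1 expr0 mulr1 subrr; apply: Gc0.
by rewrite yseqS GcS0E; apply: msumI => //; apply: gen2r.
Qed.

Lemma Gc_yseq_lower M : Gc M 0 (R * yseq M - R ^+ M * (M%:Z * (S * (S - R)))).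
Proof.
elim: M => [|M IH].
  by rewrite /yseq expr1 !expr0 mulr1 subrr !mul0r !mulr0 subr0; apply: Gc0.
have -> : R * yseq M.+1 - R ^+ M.+1 * (M.+1%:Z * (S * (S - R))) =
    R * (R * yseq M - R ^+ M * (M%:Z * (S * (S - R)))) + R * ((S - R) * yseq M).
  by rewrite /yseq intS !exprS; ring.
apply: GcD; apply: Gc_r => //.
by apply: submonoid_mulz; [apply: Gc_submonoid | apply: ltW | apply: Gc_yseq].
Qed.

Lemma GcS0_decomp M z : Gc M.+1 0 z ->
  exists y v, [/\ Gc M 0 y, 0 <= v & z = R * y + S ^+ M.+1 * (S - R) * v].
Proof.
rewrite GcS0E => -[x [b [Cx [[a1 [a2 ->]] ->]]]].
exists (x + S ^+ M.+1 * a1%:Z), a2%:Z; split; [|exact: le0z_nat|].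
  apply: GcD Cx _; rewrite mulrC.
  by apply: submonoid_mulz; [apply: Gc_submonoid | exact: le0z_nat | apply: Gc_s].
by rewrite (pmulrn R) (pmulrn (S - R)) !mulrzz; ring.
Qed.

(* Descent on [M]: write an element of [G_{M+1,0}] as [r y + s^(M+1) (s-r) v]
   with [y] in [G_{M,0}]; coprimality of [r] and [s^(M+1) (s-r)] then gives
   [y] the same shape one level down. *)
Lemma Gc_notin M (t e k : int) : t < R -> 0 < e -> 0 <= k ->
  ~ Gc M 0 (t * yseq M - R ^+ M * e - (S - R) * S ^+ M.+1 * k).
Proof.
move=> t_lt e_gt0; elim: M k => [|M IH] k k_ge0 Cz.
  have := Gc_ge0 Cz; rewrite /yseq expr0 expr1 mulr1 subrr mulr0 sub0r mul1r.
  have : 0 <= (S - R) * S * k by rewrite !mulr_ge0 // ltW.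
  lra.
have [y [v [Cy v_ge0 zE]]] := GcS0_decomp Cz.
have XE : R * (t * yseq M - R ^+ M * e - y) = S ^+ M.+1 * (S - R) * (v - t + S * k).
  apply/eqP; rewrite -subr_eq0; apply/eqP.
  transitivity ((t * yseq M.+1 - R ^+ M.+1 * e - (S - R) * S ^+ M.+2 * k) -
                (R * y + S ^+ M.+1 * (S - R) * v)); first by rewrite yseqS !exprS; ring.
  by rewrite zE subrr.
have [w [wE yE]] := coprimez_mul_eq (lt0r_neq0 R_gt0) (coprimez_R_SSR M.+1) XE.
have w_ge0 : 0 <= w.
  have Sk_ge0 : 0 <= S * k by rewrite mulr_ge0 // ltW.
  have : 0 < R * (w + 1) by rewrite mulrDr mulr1 -wE; lra.
  by rewrite pmulr_rgt0 //; lia.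
apply: (IH w w_ge0).
suff <- : y = t * yseq M - R ^+ M * e - (S - R) * S ^+ M.+1 * w by [].
by rewrite -[LHS](subKr (t * yseq M - R ^+ M * e)) yE; ring.
Qed.

Lemma nZ_neq0 j : nZ j != 0. Proof. exact: lt0r_neq0. Qed.

Lemma rn_neq0 i : (r * n i)%:Z != 0.
Proof. by rewrite PoszM mulf_neq0 // lt0r_neq0. Qed.

Lemma Gc_bond_diag i x : Gc i i x <-> Gc i.+1 i.+1 ((r * n i)%:Z * x).
Proof. by rewrite PoszM -mulrA -Gc_bond_r -Gc_bond_n. Qed.

Lemma bond_rn M : bond (fun i => (r * n i)%:Z) 0 M = R ^+ M * bond (fun i => nZ i) 0 M.
Proof. by rewrite (bondM (fun=> R) (fun i => nZ i)) bond_cst subn0. Qed.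

Section Limit.
Variables (G : zmodType) (Gp : G -> Prop) (phiG : nat -> int -> G).
Hypothesis limG : is_dlimit (fun i => Gc i i) (fun i => (r * n i)%:Z) Gp phiG.

Let phiGD i : {morph phiG i : x y / x + y}.
Proof. by case: limG => D _ _ _ _; apply: D. Qed.

Lemma G_simple : simple_pog Gp.
Proof. by apply: (dlimit_simple limG rn_neq0 Gc_bond_diag) => i; apply: Gc_simple. Qed.

Lemma G_pos i x : Gp (phiG i x) <-> Gc i i x.
Proof. exact: dlimit_pos limG rn_neq0 Gc_bond_diag i x. Qed.

Lemma G_pos0 M z : Gp (phiG M (bond (fun i => nZ i) 0 M * z)) <-> Gc M 0 z.
Proof. by rewrite G_pos -(bond_iff (Gc_bond_n M)). Qed.

Lemma phiG0E M x : phiG 0 x = phiG M (bond (fun i => nZ i) 0 M * (R ^+ M * x)).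
Proof. by rewrite -(dlimit_bond limG _ (leq0n M)) bond_rn mulrCA mulrA. Qed.

Definition dseq M := phiG M (bond (fun i => nZ i) 0 M * yseq M).

Lemma dseq_pos M : Gp (dseq M).
Proof. exact/G_pos0/Gc_yseq. Qed.

Lemma dseq_step M : pole Gp (dseq M) (dseq M.+1).
Proof.
have [_ phim _ _ _] := limG.
rewrite /pole /dseq -[phiG M _]phim -(addfB (phiGD _)).
have -> : bond (fun i => nZ i) 0 M.+1 * yseq M.+1 -
    (r * n M)%:Z * (bond (fun i => nZ i) 0 M * yseq M) =
    bond (fun i => nZ i) 0 M.+1 * (R * 0 + S ^+ M.+1 * (S - R)).
  by rewrite bondS // yseqS PoszM; ring.
by apply/G_pos0; rewrite GcS0E; apply: msumI; [apply: Gc0 | apply: gen2r].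
Qed.

Let Gp0 : Gp 0. Proof. by case: G_simple => [[]]. Qed.
Let GpD x y : Gp x -> Gp y -> Gp (x + y).
Proof. by case: G_simple => [[_ D _] _]; apply: D. Qed.

Lemma imul_dseq t g : (0 < t)%N ->
  imul Gp t (below_chain Gp dseq) g <-> Gp g /\ exists M, pole Gp g (dseq M *+ t).
Proof. exact: imul_below_chain Gp0 GpD dseq_pos dseq_step t g. Qed.

Lemma imul_dseq_lt_r t : (0 < t)%N -> (t <= r - 1)%N ->
  ~ (forall g, imul Gp t (below_chain Gp dseq) g <-> Gp g).
Proof.
move=> t_gt0 t_lt imul_full.
have GpS : Gp (phiG 0 S) by apply/G_pos.
have [_ [M]] := (imul_dseq _ t_gt0).1 ((imul_full _).2 GpS).
rewrite /pole /dseq (phiG0E M) -(addfMn (phiGD _)) -(addfB (phiGD _)).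
set N := bond _ 0 M.
have -> : N * yseq M *+ t - N * (R ^+ M * S) =
    N * (t%:Z * yseq M - R ^+ M * S - (S - R) * S ^+ M.+1 * 0).
  by rewrite (pmulrn (N * yseq M) t) mulrzz; ring.
by move/G_pos0; apply: Gc_notin => //; rewrite ltz_nat; lia.
Qed.

Lemma imul_dseq_r g : imul Gp r (below_chain Gp dseq) g <-> Gp g.
Proof.
rewrite imul_dseq //; split=> [[] // | Gg]; split=> //.
pose u := phiG 0 (S * (S - R)).
have Gu : Gp u.
  apply/G_pos; rewrite mulrC.
  by apply: submonoid_mulz; [apply: (Gc_submonoid 0 0) | apply: ltW | apply: P00_s].
have u_neq0 : u != 0.
  rewrite -(addf0 (phiGD 0)) (inj_eq (dlimit_inj limG rn_neq0 (i := 0))).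
  by rewrite mulf_neq0 // lt0r_neq0.
have [c [_ gu]] := G_simple.2 u Gu u_neq0 g.
exists c; apply: (pole_trans GpD gu).
rewrite /pole /dseq /u (phiG0E c) -!(addfMn (phiGD _)) -(addfB (phiGD _)).
set N := bond _ 0 c.
have -> : N * yseq c *+ r - N * (R ^+ c * (S * (S - R))) *+ c =
    N * (R * yseq c - R ^+ c * (c%:Z * (S * (S - R)))).
  by rewrite (pmulrn (N * yseq c)) (pmulrn (N * _)) !mulrzz; ring.
exact/G_pos0/Gc_yseq_lower.
Qed.

Lemma G_interval_r : exists D : G -> Prop,
  [/\ g_interval Gp D,
      (forall t : nat, (0 < t)%N -> (t <= r - 1)%N -> ~ (forall g, imul Gp t D g <-> Gp g))
    & (forall g, imul Gp r D g <-> Gp g)].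
Proof.
exists (below_chain Gp dseq); split; last exact: imul_dseq_r.
  exact: below_chain_interval GpD dseq_pos dseq_step.
exact: imul_dseq_lt_r.
Qed.

Lemma H_order_embedding (H : zmodType) (Hp : H -> Prop) (phiH : nat -> int -> H)
  (limH : is_dlimit P0 (fun j => nZ j) Hp phiH) :
  exists psi : H -> G, order_embedding Hp Gp psi.
Proof.
apply: (dlimit_order_embedding (c := fun i => R ^+ i) limH limG).
- exact: nZ_neq0.
- exact: rn_neq0.
- by move=> i; rewrite expf_neq0 // lt0r_neq0.
- exact: P0_bond.
- exact: Gc_bond_diag.
- by move=> i /=; rewrite PoszM exprS; ring.
move=> i x /=; have -> : R ^+ i = bond (fun=> R) 0 i by rewrite bond_cst subn0.
exact: (bond_iff (P := fun k => Gc k i) (Gc_bond_r i) x (leq0n i)).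
Qed.

Lemma K_order_embedding (K : zmodType) (Kp : K -> Prop) (phiK : nat -> int -> K)
  (limK : is_dlimit (fun i => Gc i 0) (fun=> R) Kp phiK) :
  exists psi : K -> G, order_embedding Kp Gp psi.
Proof.
apply: (dlimit_order_embedding (c := bond (fun i => nZ i) 0) limK limG).
- by move=> _; apply: lt0r_neq0.
- exact: rn_neq0.
- by move=> i; apply: bond_neq0 nZ_neq0.
- by move=> i x; apply: Gc_bond_r.
- exact: Gc_bond_diag.
- by move=> i; rewrite bondS // PoszM; ring.
by move=> i x; apply: (bond_iff (Gc_bond_n i) x (leq0n i)).
Qed.

End Limit.

End Construction.

Unset Implicit Arguments. Set Strict Implicit.

Theorem proposition3p3
  (p q r s : nat) (n : nat -> nat) (P0 : nat -> int -> Prop) :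
  (1 < q)%N -> (q < p - q)%N -> coprime p q ->
  (forall j, 0 < n j)%N ->
  (forall j, simple_component (P0 j)) ->
  (forall x, P0 0%N x <-> gen2 q%:Z (p%:Z - q%:Z) x) ->
  (forall j x, P0 j x <-> P0 j.+1 ((n j)%:Z * x)) ->
  (q < r)%N ->
  (forall l, prime l -> (l %| r)%N -> forall j, ~~ (l %| n j)%N) ->
  gen2 q%:Z (p%:Z - q%:Z) s%:Z -> coprime r s -> (r < s - r)%N ->
  let Gc := Gcone P0 n r s in
  (* (i) *)
  (forall i j, simple_component (Gc i j)) /\
  (* (ii) *)
  (forall i j x, Gc i j x <-> Gc i j.+1 ((n j)%:Z * x)) /\
  (forall i j x, Gc i j x <-> Gc i.+1 j (r%:Z * x)) /\
  (* (iii) and (iv) *)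
  (forall (H : zmodType) (Hp : H -> Prop) (phiH : nat -> int -> H),
     is_dlimit P0 (fun j => (n j)%:Z) Hp phiH ->
   forall (K : zmodType) (Kp : K -> Prop) (phiK : nat -> int -> K),
     is_dlimit (fun i => Gc i 0%N) (fun _ => r%:Z) Kp phiK ->
   forall (G : zmodType) (Gp : G -> Prop) (phiG : nat -> int -> G),
     is_dlimit (fun i => Gc i i) (fun i => (r * n i)%:Z) Gp phiG ->
     [/\ simple_pog Gp, rank_one G,
         (exists psi : H -> G, order_embedding Hp Gp psi),
         (exists psi : K -> G, order_embedding Kp Gp psi)
       & (exists D : G -> Prop,
           [/\ g_interval Gp D,
               (forall t : nat, (0 < t)%N -> (t <= r - 1)%N ->
                  ~ (forall g, imul Gp t D g <-> Gp g))
             & (forall g, imul Gp r D g <-> Gp g)])]).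
Proof.
move=> _ _ _ n_gt0 P0_simple P00E P0_bond q_lt_r r_primes s_in_A rs_coprime r_lt_sr Gc.
have r_gt0 : (0 < r)%N by apply: leq_trans q_lt_r.
have rn_coprime j : coprime r (n j).
  by apply: coprime_prime_divisors => // l l_prime /r_primes; apply.
have P00_s : P0 0%N s%:Z by apply/P00E.
split; first by move=> i j; apply: Gc_simple.
split; first by move=> i j x; apply: Gc_bond_n.
split; first by move=> i j x; apply: Gc_bond_r.
move=> H Hp phiH limH K Kp phiK limK G Gp phiG limG; split.
- by apply: (G_simple (r := r) (s := s)); eassumption.
- by apply: (dlimit_rank_one limG) => i; apply: rn_neq0.
- by apply: (H_order_embedding (r := r) (s := s)); eassumption.
- by apply: (K_order_embedding (r := r) (s := s)); eassumption.
- by apply: (G_interval_r (r := r) (s := s)); eassumption.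
Qed.
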